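(* Let $(S,\lambda_S^\bullet,\mu_S^{(0)})$, $(G,\lambda_G^\bullet,\mu_G^{(0)})$, $(T,\lambda_T^\bullet,\mu_T^{(0)})$ be Haar groupoids, $p:S\to G$, $q:T\to G$ homomorphisms of Haar groupoids, $P$ their weak pullback, and $\lambda_P^{(s,g,t)}=\lambda_S^s\times\delta_g\times\lambda_T^t$ for $(s,g,t)\in P^{(0)}$. Then $\lambda_P^\bullet$ is left invariant: for every $x\in P$ and every Borel $E\subseteq P$, $\lambda_P^{d_P(x)}(E)=\lambda_P^{r_P(x)}\big(x\cdot(E\cap P^{d_P(x)})\big)$, where $P^{v}=r_P^{-1}(v)$.
   Context: For a groupoid $G$: unit space $G^{(0)}$, range/source $r,d$, $G^u=r^{-1}(u)$. A continuous left Haar system on a groupoid $G$ is a family $\{\lambda^u\}_{u\in G^{(0)}}$ of positive Borel measures on $G$, $\lambda^u$ concentrated on $G^u$, which is continuous ($u\mapsto\int f\,d\lambda^u$ continuous for every continuous compactly supported $f\ge0$), left invariant ($\lambda^{d(x)}(E)=\lambda^{r(x)}(x\cdot(E\cap G^{d(x)}))$) and positive on open sets ($\lambda^u(A)>0$ for open $A$ meeting $G^u$). A Haar groupoid $(G,\lambda^\bullet,\mu^{(0)})$ is a second countable, locally compact, Hausdorff topological groupoid with a continuous left Haar system and a non-zero Radon measure $\mu^{(0)}$ on $G^{(0)}$ that is quasi-invariant (the induced measure $\mu(E)=\int\lambda^u(E)d\mu^{(0)}(u)$ and $\mu^{-1}(E)=\mu(E^{-1})$ are mutually absolutely continuous).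 A homomorphism of Haar groupoids is a continuous groupoid homomorphism $p$ with $p_*\mu\sim\nu$ for the induced measures. The weak pullback is $P=\{(s,g,t)\in S\times G\times T: r_G(g)=r_G(p(s)),\ d_G(g)=r_G(q(t))\}$ with subspace topology and groupoid operations: $((s,g,t),(\sigma,h,\tau))$ composable iff $r_S(\sigma)=d_S(s)$, $r_T(\tau)=d_T(t)$, $h=p(s)^{-1}gq(t)$, product $(s\sigma,g,t\tau)$; inverse $(s^{-1},p(s)^{-1}gq(t),t^{-1})$; $r_P(s,g,t)=(r_S(s),g,r_T(t))$, $d_P(s,g,t)=(d_S(s),p(s)^{-1}gq(t),d_T(t))$; $P^{(0)}=\{(s,g,t):s\in S^{(0)},t\in T^{(0)},r_G(g)=p(s),d_G(g)=q(t)\}$. *)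

From HB Require Import structures.
From mathcomp Require Import all_boot all_order all_algebra.
From mathcomp Require Import all_classical all_reals all_analysis.
Set Implicit Arguments. Unset Strict Implicit. Unset Printing Implicit Defensive.
Import Order.TTheory GRing.Theory Num.Theory.
Import numFieldNormedType.Exports.
HB.saturate prod.

Local Open Scope classical_set_scope.
Local Open Scope ring_scope.

Notation borel X := (g_sigma_algebraType (@open X)).
Definition borel_set (X : ptopologicalType) (A : set X) : Prop :=
  @measurable _ (borel X) (A : set (borel X)).

(* A groupoid whose unit space is a subset of the carrier: range r, source d,
   inverse, and a (total) multiplication only meaningful on composable pairs
   (x, y) with d x = r y. *)
Record groupoid_data (X : Type) := GroupoidData {
  gr : X -> X; gd : X -> X; ginv : X -> X; gmul : X -> X -> X }.

Section Groupoid.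
Context {X : Type} (G : groupoid_data X).

Definition units : set X := [set u | gr G u = u].
Definition rfiber (u : X) : set X := [set x | gr G x = u].
Definition composable (x y : X) : Prop := gd G x = gr G y.

Definition is_groupoid_on (C : set X) : Prop :=
  (forall x, C x -> C (gr G x) /\ C (gd G x) /\ C (ginv G x)) /\
  (forall x y, C x -> C y -> composable x y -> C (gmul G x y)) /\
  [/\ (forall x, C x -> gr G (gr G x) = gr G x /\ gr G (gd G x) = gd G x
                      /\ gd G (gr G x) = gr G x /\ gd G (gd G x) = gd G x),
      (forall x y, C x -> C y -> composable x y ->
          gr G (gmul G x y) = gr G x /\ gd G (gmul G x y) = gd G y),
      (forall x y z, C x -> C y -> C z -> composable x y -> composable y z ->
          gmul G (gmul G x y) z = gmul G x (gmul G y z)),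
      (forall x, C x -> gmul G (gr G x) x = x /\ gmul G x (gd G x) = x) &
      (forall x, C x -> gr G (ginv G x) = gd G x /\ gd G (ginv G x) = gr G x
          /\ gmul G x (ginv G x) = gr G x /\ gmul G (ginv G x) x = gd G x)].

Definition is_groupoid : Prop := is_groupoid_on setT.
End Groupoid.

Definition is_topological_groupoid (X : ptopologicalType) (G : groupoid_data X)
  : Prop :=
  is_groupoid G /\
  {within [set xy : X * X | composable G xy.1 xy.2],
     continuous (fun xy : X * X => gmul G xy.1 xy.2)} /\
  continuous (ginv G).

Section Haar.
Context {R : realType} {X : ptopologicalType} (G : groupoid_data X).
Local Open Scope ereal_scope.

Definition is_left_haar_system (lam : X -> {measure set (borel X) -> \bar R})
  : Prop :=
  [/\
      (forall u, units G u -> lam u (~` rfiber G u) = 0),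
      (forall f : X -> R, continuous f ->
          compact (closure [set x | f x != 0%R]) -> (forall x, (0 <= f x)%R) ->
          (forall u, units G u -> \int[lam u]_x (f x)%:E \is a fin_num) /\
          {within units G, continuous
             (fun u => fine (\int[lam u]_x (f x)%:E))}),
      (forall (x : X) (E : set X), borel_set E ->
          lam (gd G x) E =
          lam (gr G x) (gmul G x @` (E `&` rfiber G (gd G x)))) &
      (forall u (A : set X), units G u -> open A ->
          A `&` rfiber G u !=set0 -> 0 < lam u A)].

(* Radon measure on the subspace A (represented as a Borel measure on X
   concentrated on A): finite on compacts, outer regular on Borel sets,
   inner regular on open sets (opens of A are the traces U `&` A). *)
Definition radon_on (A : set X) (mu : set X -> \bar R) : Prop :=
  [/\ mu (~` A) = 0,
      (forall K, compact K -> K `<=` A -> mu K < +oo),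
      (forall E, borel_set E -> E `<=` A ->
          mu E = ereal_inf [set mu (U `&` A) | U in [set U | open U /\ E `<=` U]]) &
      (forall U, open U ->
          mu (U `&` A) = ereal_sup [set mu K | K in [set K | compact K /\ K `<=` U `&` A]])].

Definition induced_measure (lam : X -> {measure set (borel X) -> \bar R})
  (mu0 : {measure set (borel X) -> \bar R}) (E : set X) : \bar R :=
  \int[mu0]_(u in units G) lam u E.

Definition quasi_invariant (lam : X -> {measure set (borel X) -> \bar R})
  (mu0 : {measure set (borel X) -> \bar R}) : Prop :=
  forall E : set X, borel_set E ->
    (induced_measure lam mu0 E = 0 <-> induced_measure lam mu0 (ginv G @` E) = 0).

Definition haar_groupoid (lam : X -> {measure set (borel X) -> \bar R})
  (mu0 : {measure set (borel X) -> \bar R}) : Prop :=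
  [/\ @second_countable X, locally_compact [set: X], hausdorff_space X &
      is_topological_groupoid G] /\
  [/\ is_left_haar_system lam,
      mu0 setT <> 0, radon_on (units G) mu0 & quasi_invariant lam mu0].
End Haar.

(* Homomorphism of Haar groupoids: continuous groupoid homomorphism p with
   p_* mu_S ~ mu_G (mutual absolute continuity of induced measures). *)
Definition haar_hom {R : realType} {X Y : ptopologicalType}
  (S : groupoid_data X) (lamS : X -> {measure set (borel X) -> \bar R})
  (muS : {measure set (borel X) -> \bar R})
  (G : groupoid_data Y) (lamG : Y -> {measure set (borel Y) -> \bar R})
  (muG : {measure set (borel Y) -> \bar R}) (p : X -> Y) : Prop :=
  [/\ continuous p,
      (forall x y, composable S x y ->
         composable G (p x) (p y) /\ p (gmul S x y) = gmul G (p x) (p y)) &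
      (forall E : set Y, borel_set E ->
         (induced_measure S lamS muS (p @^-1` E) = 0%E <->
          induced_measure G lamG muG E = 0%E))].

Section WeakPullback.
Context {S G T : ptopologicalType} (gS : groupoid_data S) (gG : groupoid_data G)
  (gT : groupoid_data T) (p : S -> G) (q : T -> G).

Definition wp_set : set (S * G * T) :=
  [set z | gr gG z.1.2 = gr gG (p z.1.1) /\ gd gG z.1.2 = gr gG (q z.2)].

Definition wp_mid (z : S * G * T) : G :=
  gmul gG (gmul gG (ginv gG (p z.1.1)) z.1.2) (q z.2).

Definition wp_groupoid : groupoid_data (S * G * T) := GroupoidData
  (fun z => (gr gS z.1.1, z.1.2, gr gT z.2))
  (fun z => (gd gS z.1.1, wp_mid z, gd gT z.2))
  (fun z => (ginv gS z.1.1, wp_mid z, ginv gT z.2))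
  (fun z w => (gmul gS z.1.1 w.1.1, z.1.2, gmul gT z.2 w.2)).

Definition wp_rfiber (v : S * G * T) : set (S * G * T) :=
  wp_set `&` rfiber wp_groupoid v.

(* lam_P^{(s,g,t)} = lam_S^s x delta_g x lam_T^t, as the iterated integral
   of the indicator (the definition of the product measure). *)
Definition wp_lam {R : realType} (lamS : S -> {measure set (borel S) -> \bar R})
  (lamT : T -> {measure set (borel T) -> \bar R})
  (v : S * G * T) (E : set (S * G * T)) : \bar R :=
  (\int[lamS v.1.1]_a \int[@dirac _ (borel G) v.1.2 R]_h
      \int[lamT v.2]_b (\1_E ((a : S), (h : G), (b : T)) : R)%:E)%E.
End WeakPullback.

(* The Haar system of the weak pullback is a product λ_S^s × δ_g × λ_T^t, and
   left translation by x = (s, g, t) acts coordinatewise: it multiplies the S-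
   and T-coordinates on the left by s and t, and sends the middle coordinate
   p(s)^{-1} g q(t) of d_P(x) to g.  Evaluating the Dirac integrals, both sides
   of the identity become iterated λ_S, λ_T integrals of the indicator of E,
   and left invariance of λ_S and λ_T, used as a change of variables a ↦ s a,
   b ↦ t b between fibres, identifies them.  The change of variables is done
   for arbitrary non-negative integrands, measurable or not, by comparing
   simple functions below them, so no measurability of E or of the partial
   integrals is needed. *)
From HB Require Import structures.
From mathcomp Require Import all_boot all_order all_algebra.
From mathcomp Require Import all_classical all_reals all_analysis.
Import Order.TTheory GRing.Theory Num.Theory.
Import HBNNSimple numFieldNormedType.Exports.
Local Open Scope classical_set_scope.
Local Open Scope ring_scope.

Section nnsfun_pullback.
Context {d d'} {X : measurableType d} {Y : measurableType d'} {R : realType}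
  (F : set X) (mF : measurable F) (L : X -> Y) (mL : measurable_fun F L)
  (h : {nnsfun Y >-> R}).

Definition pullback_on : X -> R := ((h : Y -> R) \o L) \_ F.

Lemma pullback_onE x : pullback_on x = if x \in F then h (L x) else 0.
Proof. by rewrite /pullback_on patchE. Qed.

Lemma measurable_pullback_on : measurable_fun setT pullback_on.
Proof. by apply/(measurable_restrictT _ mF); exact: measurableT_comp. Qed.

HB.instance Definition _ :=
  isMeasurableFun.Build _ _ _ _ pullback_on measurable_pullback_on.

Lemma finite_range_pullback_on : finite_set (range pullback_on).
Proof.
apply: (@sub_finite_set _ _ (0 |` range h)); last first.
  by rewrite finite_setU; split; [exact: finite_set1|exact: fimfunP].
move=> _ [x _ <-]; rewrite pullback_onE.
by case: ifP => _; [right; exists (L x)|left].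
Qed.

HB.instance Definition _ := @FiniteImage.Build X R pullback_on
  finite_range_pullback_on.

Lemma pullback_on_ge0 x : 0 <= pullback_on x.
Proof. by rewrite pullback_onE; case: ifP. Qed.

HB.instance Definition _ := @isNonNegFun.Build X R pullback_on pullback_on_ge0.

Definition pullback_on_nnsfun : {nnsfun X >-> R} := pullback_on.
End nnsfun_pullback.

Section integral_pushforward.
Context {d d'} {X : measurableType d} {Y : measurableType d'} {R : realType}.
Local Open Scope ereal_scope.

(* The integrands need not be measurable: both integrals are suprema over
   simple functions, and [pullback_on_nnsfun] turns one below [f] into one
   below [g] with the same integral. *)
Lemma ge0_le_integral_pushforward {mu : {measure set X -> \bar R}}
    {nu : {measure set Y -> \bar R}} {F : set X} {L : X -> Y}
    {f : Y -> \bar R} {g : X -> \bar R} :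
  measurable F -> measurable_fun F L ->
  (forall A, measurable A -> nu A = mu (F `&` L @^-1` A)) ->
  (forall x, 0 <= f x) -> (forall x, 0 <= g x) ->
  (forall x, F x -> f (L x) <= g x) ->
  \int[nu]_x f x <= \int[mu]_x g x.
Proof.
move=> mF mL nuE f0 g0 fg; rewrite ge0_integralTE// ge0_integralTE//.
apply: ge_ereal_sup => _ [h /= hf <-].
pose hL := pullback_on_nnsfun F mF L mL h.
have -> : sintegral nu h = sintegral mu hL.
  rewrite !sintegralEnnsfun; apply: eq_fsbigr => r; rewrite inE /= => r0.
  congr (_ * _); rewrite nuE; last exact: measurable_funPTI.
  congr (mu _); apply/seteqP; split => x /=.
    by move=> [Fx hx]; rewrite pullback_onE mem_set.
  rewrite pullback_onE; case: ifPn => [/[!inE] Fx hx|_ hr]; first by split.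
  by move: r0; rewrite -hr ltxx.
apply: ereal_sup_ubound; exists hL => // x.
rewrite /= pullback_onE; case: ifPn => [/[!inE] Fx|_]; last exact: g0.
exact: le_trans (hf _) (fg _ Fx).
Qed.

End integral_pushforward.

Section integral_dirac.
Context {d} {X : measurableType d} {R : realType}.
Local Open Scope ereal_scope.

Lemma ge0_integral_dirac (y : X) (f : X -> \bar R) : measurable [set y] ->
  (forall x, 0 <= f x) -> \int[\d_y]_x f x = f y.
Proof.
move=> my f0.
have dirac_on_y A : measurable A ->
    @dirac _ X y R A = @dirac _ X y R ([set y] `&` id @^-1` A).
  move=> mA; rewrite !diracE; congr (_%:E).
  by case: (pselect (A y)) => Ay; [rewrite !mem_set|rewrite !memNset//; case].
have int_cst : \int[\d_y]_x (cst (f y)) x = f y.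
  by rewrite integral_cst//= diracE mem_set// mule1.
have cst0 (x : X) : 0 <= cst (f y) x by exact: f0.
apply/le_anti/andP; split.
- rewrite -[leRHS]int_cst.
  by apply: (ge0_le_integral_pushforward my _ dirac_on_y f0 cst0) => // x ->.
- rewrite -[leLHS]int_cst.
  by apply: (ge0_le_integral_pushforward my _ dirac_on_y cst0 f0) => // x ->.
Qed.

End integral_dirac.

Lemma open_borel {X : ptopologicalType} (A : set X) : open A -> borel_set A.
Proof. by move=> oA; apply: sub_sigma_algebra. Qed.

Lemma closed_borel {X : ptopologicalType} (A : set X) : closed A -> borel_set A.
Proof.
move=> cA; rewrite -[A]setCK; apply: (@measurableC _ (borel X)).
by apply: open_borel; exact: closed_openC.
Qed.

Lemma borel_set1 {X : ptopologicalType} (y : X) :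
  hausdorff_space X -> borel_set [set y].
Proof.
move=> hX; apply: closed_borel.
exact: (@accessible_closed_set1 X (hausdorff_accessible hX) y).
Qed.

Lemma within_continuous_measurable_fun {X Y : ptopologicalType} (D : set X)
    (f : X -> Y) :
  borel_set D -> {within D, continuous f} ->
  measurable_fun (D : set (borel X)) (f : borel X -> borel Y).
Proof.
move=> mD /continuousP cf.
apply: (@measurability _ _ (borel X) (borel Y) D f (@open Y) erefl).
move=> _ [B oB <-]; have /open_subspaceP [V oV VD] := cf _ oB.
rewrite setIC -VD; apply: (@measurableI _ (borel X)) => //.
exact: open_borel.
Qed.

Lemma within_continuous_comp {X Y Z : topologicalType} {A : set Y} {B : set X}
    {f : Y -> Z} {k : X -> Y} :
  {within A, continuous f} -> continuous k -> (forall x, B x -> A (k x)) ->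
  {within B, continuous (f \o k)}.
Proof.
move=> /subspace_continuousP cf ck kBA; apply/subspace_continuousP => x Bx W /=.
move=> /(cf _ (kBA _ Bx)) fW; rewrite /within /= in fW |- *.
change (\forall z \near x, B z -> W (f (k z))).
have fWk : \forall z \near x, A (k z) -> W (f (k z)) := ck x _ fW.
by apply: filterS fWk => z fWz Bz; exact: fWz (kBA _ Bz).
Qed.

Section groupoid.
Context {X : Type} {gX : groupoid_data X} (hX : is_groupoid gX).
Local Notation r := (gr gX).
Local Notation dd := (gd gX).
Local Notation inv := (ginv gX).
Local Notation mul := (gmul gX).

Let axioms := hX.2.2.

Lemma gr_gmul x y : composable gX x y -> r (mul x y) = r x.
Proof. by have [_ A _ _ _] := axioms => /(A x y I I) []. Qed.

Lemma gmulA x y z : composable gX x y -> composable gX y z ->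
  mul (mul x y) z = mul x (mul y z).
Proof. by have [_ _ A _ _] := axioms; exact: A. Qed.

Lemma gmul_grx x : mul (r x) x = x.
Proof. by have [_ _ _ A _] := axioms; have [] := A x I. Qed.

Lemma gmulx_gd x : mul x (dd x) = x.
Proof. by have [_ _ _ A _] := axioms; have [] := A x I. Qed.

Lemma gr_ginv x : r (inv x) = dd x.
Proof. by have [_ _ _ _ A] := axioms; have [] := A x I. Qed.

Lemma gd_ginv x : dd (inv x) = r x.
Proof. by have [_ _ _ _ A] := axioms; have [_ []] := A x I. Qed.

Lemma gmulgV x : mul x (inv x) = r x.
Proof. by have [_ _ _ _ A] := axioms; have [_ [_ []]] := A x I. Qed.

Lemma gmulVg x : mul (inv x) x = dd x.
Proof. by have [_ _ _ _ A] := axioms; have [_ [_ [_]]] := A x I. Qed.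

Lemma ginvK x : inv (inv x) = x.
Proof.
have c1 : composable gX (inv (inv x)) (inv x).
  by rewrite /composable gd_ginv.
have c2 : composable gX (inv x) x by rewrite /composable gd_ginv.
by rewrite -[LHS]gmulx_gd gd_ginv gr_ginv -[dd x]gmulVg -gmulA // gmulVg gd_ginv
  gmul_grx.
Qed.

Lemma gr_gmulV {s a} : r a = r s -> r (mul (inv s) a) = dd s.
Proof. by move=> ra; rewrite gr_gmul ?gr_ginv // /composable gd_ginv ra. Qed.

Lemma gmulKg {s a} : r a = dd s -> mul (inv s) (mul s a) = a.
Proof.
move=> ra; have c1 : composable gX (inv s) s by rewrite /composable gd_ginv.
have c2 : composable gX s a by rewrite /composable ra.
by rewrite -gmulA // gmulVg -ra gmul_grx.
Qed.

Lemma gmulKVg {s a} : r a = r s -> mul s (mul (inv s) a) = a.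
Proof.
move=> ra; have c1 : composable gX s (inv s) by rewrite /composable gr_ginv.
have c2 : composable gX (inv s) a by rewrite /composable gd_ginv ra.
by rewrite -gmulA // gmulgV -ra gmul_grx.
Qed.

Lemma image_gmul_rfiber s (B : set X) :
  mul s @` (B `&` rfiber gX (dd s)) = rfiber gX (r s) `&` mul (inv s) @^-1` B.
Proof.
apply/seteqP; split => [_ [a [Ba ra] <-]|a [ra Ba]].
  rewrite /rfiber /= in ra *.
  split; first by rewrite gr_gmul // /composable ra.
  by rewrite /= gmulKg.
exists (mul (inv s) a); last exact: gmulKVg.
by split => //; exact: gr_gmulV.
Qed.

End groupoid.

Section topological_groupoid.
Context {X : ptopologicalType} {gX : groupoid_data X}
  (hT : is_topological_groupoid gX) (hX : hausdorff_space X).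
Local Notation r := (gr gX).
Local Notation dd := (gd gX).
Local Notation inv := (ginv gX).
Local Notation mul := (gmul gX).

Let hG : is_groupoid gX := hT.1.

Lemma continuous_gr : continuous r.
Proof.
have -> : r = (fun xy : X * X => mul xy.1 xy.2) \o (fun x => (x, inv x)).
  by apply/funext => x /=; rewrite (gmulgV hG).
apply/continuous_subspace_setT.
apply: (within_continuous_comp hT.2.1) => [x|x _].
  by apply: cvg_pair; [exact: cvg_id|exact: hT.2.2].
by rewrite /= /composable (gr_ginv hG).
Qed.

Lemma closed_rfiber u : closed (rfiber gX u).
Proof.
exact: (preimage_closed (fun x _ => continuous_gr x))
  (@accessible_closed_set1 X (hausdorff_accessible hX) u).
Qed.

Lemma borel_rfiber u : borel_set (rfiber gX u).
Proof. exact: closed_borel (closed_rfiber u). Qed.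

Lemma measurable_gmul s :
  measurable_fun (rfiber gX (dd s) : set (borel X))
    (mul s : borel X -> borel X).
Proof.
apply: within_continuous_measurable_fun; first exact: borel_rfiber.
apply: (within_continuous_comp (k := fun a => (s, a)) hT.2.1) => [x|x].
  by apply: cvg_pair; [exact: cvg_cst|exact: cvg_id].
exact: esym.
Qed.

Section left_haar_system.
Context {R : realType} {lam : X -> {measure set (borel X) -> \bar R}}
  (hlam : is_left_haar_system gX lam).
Local Open Scope ereal_scope.

Lemma haar_rfiber_pushforward s B : borel_set B ->
  lam (dd s) B = lam (r s) (rfiber gX (r s) `&` mul (inv s) @^-1` B).
Proof.
by have [_ _ linv _] := hlam => /(linv s); rewrite (image_gmul_rfiber hG).
Qed.

Lemma haar_integral_translate {s} {f g : X -> \bar R} :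
  (forall x, 0 <= f x) -> (forall x, 0 <= g x) ->
  (forall a, r a = dd s -> f (mul s a) = g a) ->
  \int[lam (r s)]_x f x = \int[lam (dd s)]_x g x.
Proof.
move=> f0 g0 fg; apply/le_anti/andP; split.
  apply: (ge0_le_integral_pushforward (borel_rfiber _) (measurable_gmul s))
    => // [A mA|x ra]; last by rewrite fg.
  have := haar_rfiber_pushforward (inv s) _ mA.
  by rewrite (ginvK hG) (gr_ginv hG) (gd_ginv hG).
have := measurable_gmul (inv s); rewrite (gd_ginv hG) => mL.
apply: (ge0_le_integral_pushforward (borel_rfiber _) mL) => // [A mA|x ra].
  exact: haar_rfiber_pushforward.
by rewrite -fg ?(gmulKVg hG) ?(gr_gmulV hG).
Qed.

End left_haar_system.
End topological_groupoid.

Section weak_pullback.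
Context {S G T : ptopologicalType} {gS : groupoid_data S} (gG : groupoid_data G)
  {gT : groupoid_data T} (p : S -> G) (q : T -> G)
  (hS : is_groupoid gS) (hT : is_groupoid gT).
Local Notation P := (wp_groupoid gS gG gT p q).

Lemma wp_translate_rfiberP {s g t a b} {E : set (S * G * T)} :
  E `<=` wp_set gG p q -> gr gS a = gd gS s -> gr gT b = gd gT t ->
  (gmul P (s, g, t) @` (E `&` wp_rfiber gS gG gT p q (gd P (s, g, t))))
    (gmul gS s a, g, gmul gT t b) <-> E (a, wp_mid gG p q (s, g, t), b).
Proof.
move=> EP ra rb; split => [|Eamb].
  move=> [[[a' m'] b'] [Ez [_ [/= ra' m'E rb']]] [sa' tb']].
  by rewrite -(gmulKg hS ra) -(gmulKg hT rb) -sa' -tb' (gmulKg hS ra')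
    (gmulKg hT rb') -m'E.
exists (a, wp_mid gG p q (s, g, t), b) => //.
by split=> //; split; [exact: EP|rewrite /rfiber /= ra rb].
Qed.

End weak_pullback.

Theorem proposition4p4 (R : realType) (S G T : ptopologicalType)
  (gS : groupoid_data S) (lamS : S -> {measure set (borel S) -> \bar R})
  (muS : {measure set (borel S) -> \bar R})
  (gG : groupoid_data G) (lamG : G -> {measure set (borel G) -> \bar R})
  (muG : {measure set (borel G) -> \bar R})
  (gT : groupoid_data T) (lamT : T -> {measure set (borel T) -> \bar R})
  (muT : {measure set (borel T) -> \bar R})
  (p : S -> G) (q : T -> G) :
  haar_groupoid gS lamS muS ->
  haar_groupoid gG lamG muG ->
  haar_groupoid gT lamT muT ->
  haar_hom gS lamS muS gG lamG muG p ->
  haar_hom gT lamT muT gG lamG muG q ->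
  forall (x : S * G * T) (E : set (S * G * T)),
    wp_set gG p q x ->
    E `<=` wp_set gG p q ->
    (exists B : set (S * G * T), borel_set B /\ E = wp_set gG p q `&` B) ->
    let P := wp_groupoid gS gG gT p q in
    wp_lam lamS lamT (gd P x) E =
    wp_lam lamS lamT (gr P x)
      (gmul P x @` (E `&` wp_rfiber gS gG gT p q (gd P x))).
Proof.
move=> [[_ _ hausS topS] [haarS _ _ _]] [[_ _ hausG _] _]
  [[_ _ hausT topT] [haarT _ _ _]] _ _ [[s g] t] E _ EP _ P.
have inner0 (A : set (S * G * T)) u a (h : G) :
    (0 <= \int[lamT u]_b (\1_A (a, h, b))%:E)%E.
  exact: integral_ge0.
have middle0 (A : set (S * G * T)) (u : T) (y : borel G) (a : S) :
    (0 <= \int[\d_y]_h \int[lamT u]_b (\1_A (a, h, b))%:E)%E.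
  exact: integral_ge0.
rewrite /wp_lam /=; symmetry.
apply: (haar_integral_translate topS hausS haarS);
  [exact: middle0|exact: middle0|move=> a ra].
rewrite !(ge0_integral_dirac _ _ (borel_set1 _ hausG) (inner0 _ _ _)).
apply: (haar_integral_translate topT hausT haarT);
  [by move=> b|by move=> b|move=> b rb].
have translateP := wp_translate_rfiberP gG p q topS.1 topT.1 EP ra rb.
rewrite !indicE; congr ((nat_of_bool _)%:R%:E).
by apply/idP/idP => /set_mem/translateP; exact: mem_set.
Qed.
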